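(* If $k\geq 2$ is an integer such that $2k+1$ is prime, then $f(k)=\frac{k(k-2)}{3}$.
   Context: A $k$-colouring of the edges of the complete graph $K_n$ (colours from $[k]=\{1,\dots,k\}$) is called connected if for each colour $i\in[k]$ the edges of colour $i$ form a connected spanning subgraph of $K_n$. A triangle is multicoloured if its three edges have three distinct colours; its colour set is the set of these three colours. $f(k)$ denotes the minimum, over all $n$ and all connected $k$-colourings of $K_n$, of the number of distinct $3$-sets of colours that occur as colour sets of multicoloured triangles. *)

From mathcomp Require Import all_boot.
Set Implicit Arguments. Unset Strict Implicit. Unset Printing Implicit Defensive.

(* An edge k-colouring of K_n: vertices 'I_n, colour of edge {x,y} is c x y
   (only values with x != y matter); required symmetric. *)
Definition edge_colouring (n k : nat) (c : 'I_n -> 'I_n -> 'I_k) : Prop :=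
  forall x y : 'I_n, c x y = c y x.

Definition colour_rel (n k : nat) (c : 'I_n -> 'I_n -> 'I_k) (i : 'I_k) : rel 'I_n :=
  fun u v => (u != v) && (c u v == i).

Definition connected_colouring (n k : nat) (c : 'I_n -> 'I_n -> 'I_k) : Prop :=
  edge_colouring c /\
  forall (i : 'I_k) (x y : 'I_n), connect (colour_rel c i) x y.

Definition multicoloured (n k : nat) (c : 'I_n -> 'I_n -> 'I_k) (x y z : 'I_n) : bool :=
  [&& x != y, y != z, x != z,
      c x y != c y z, c y z != c x z & c x y != c x z].

Definition triangle_colour_sets (n k : nat) (c : 'I_n -> 'I_n -> 'I_k) : {set {set 'I_k}} :=
  [set [set c t.1.1 t.1.2; c t.1.2 t.2; c t.1.1 t.2]
   | t : 'I_n * 'I_n * 'I_n & multicoloured c t.1.1 t.1.2 t.2].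

Definition num_triangle_colour_sets (n k : nat) (c : 'I_n -> 'I_n -> 'I_k) : nat :=
  #|triangle_colour_sets c|.

Definition f_equals (k m : nat) : Prop :=
  (exists (n : nat) (c : 'I_n -> 'I_n -> 'I_k),
      2 <= n /\ connected_colouring c /\ num_triangle_colour_sets c = m) /\
  (forall (n : nat) (c : 'I_n -> 'I_n -> 'I_k),
      2 <= n -> connected_colouring c -> m <= num_triangle_colour_sets c).

From mathcomp Require Import all_boot ssralg zmodp zify.
Import GRing.Theory.
Set Implicit Arguments. Unset Strict Implicit. Unset Printing Implicit Defensive.

(* Lower bound: fix a colour i and a nonempty proper set A of the other colours.
   Merging the colours into the classes {i}, A and the rest gives a 3-colouring
   whose classes are still connected, and such a colouring of K_n (n >= 2) has a
   rainbow triangle, by a Gallai-type argument deleting one vertex at a time.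
   Its colour set contains i and crosses the cut between A and the rest, so the
   colour sets through i connect all k - 1 other colours: there are at least
   k - 2 of them, and double counting gives k (k - 2) <= 3 f(k).
   Upper bound: colour the edge xy of K_p, p = 2k + 1, by the circular distance
   of x - y to 0.  Scaling by the difference u of colour a, every colour set
   through a is {a, col (t u), col ((t + 1) u)}, and t and -1 - t give the same
   set, which leaves only k - 2 sets through each colour. *)

Lemma card_set3 (U : finType) (a b d : U) :
  (#|[set a; b; d]| == 3) = [&& a != b, b != d & a != d].
Proof.
rewrite setUC cardsU1 cards2 !inE (eq_sym d b) (eq_sym d a).
by case: (a == b); case: (a == d); case: (b == d).
Qed.

Lemma sum_card_containing (U : finType) (S : {set {set U}}) :
  \sum_(i : U) #|[set T in S | i \in T]| = \sum_(T in S) #|T|.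
Proof.
have card_sum (P : pred {set U}) : #|[set T in S | P T]| = \sum_(T in S) P T.
  rewrite -sum1_card big_mkcond [RHS]big_mkcond; apply: eq_bigr => T _.
  by rewrite inE; case: (T \in S); case: (P T).
rewrite (eq_bigr _ (fun i _ => card_sum (fun T => i \in T))) exchange_big /=.
apply: eq_bigr => T _; rewrite -sum1_card [RHS]big_mkcond.
by apply: eq_bigr => i _; case: (i \in T).
Qed.

Lemma mem_set3_full (K : finType) (a b d j : K) : #|K| = 3 ->
  [&& a != b, b != d & a != d] -> j \in [set a; b; d].
Proof.
rewrite -card_set3 => cardK /eqP card3.
suff -> : [set a; b; d] = setT by rewrite inE.
by apply/eqP; rewrite eqEcard subsetT cardsT cardK card3.
Qed.

Lemma inj_on_set3 (U : finType) (V : eqType) (f : U -> V) (a b d : U) :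
  [&& f a != f b, f b != f d & f a != f d] -> {in [set a; b; d] &, injective f}.
Proof.
case/and3P=> /negPf ab /negPf bd /negPf ad x y; rewrite !inE -!orbA.
by case/or3P=> /eqP-> /or3P[]/eqP-> /eqP; rewrite // ?ab ?bd ?ad // eq_sym ?ab ?bd ?ad.
Qed.

(* The bound |W| - 1 <= |N| on the edges of a connected graph, with e T an edge
   crossing the cut between A and W :\: A. *)
Lemma grow_card_leq (U V : finType) (W : {set U}) (N : {set V}) (e : V -> {set U}) :
  W != set0 ->
  (forall A : {set U}, A \subset W -> A != set0 -> A != W ->
     exists2 T, T \in N & ~~ (e T \subset A) /\ exists2 b, b \in W & e T \subset b |: A) ->
  #|W| <= #|N|.+1.
Proof.
move=> W0 grow.
have chain m : m < #|W| -> exists A : {set U}, exists2 E : {set V},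
    [/\ A \subset W, #|A| = m.+1 & {in E, forall T, e T \subset A}] &
    E \subset N /\ #|E| = m.
  elim: m => [_ | m IH lt_mW].
    case/set0Pn: W0 => w wW; exists [set w], set0; last by rewrite sub0set cards0.
    by rewrite sub1set wW cards1; split=> // T; rewrite inE.
  have [A [E [AW cardA eEA] [EN cardE]]] := IH (ltnW lt_mW).
  have A0 : A != set0 by rewrite -card_gt0 cardA.
  have AW' : A != W by apply: contraTneq lt_mW => <-; rewrite cardA ltnn.
  have [T TN [eTA [b bW eTbA]]] := grow A AW A0 AW'.
  have bA : b \notin A.
    apply: contra eTA => bA; apply: subset_trans eTbA _.
    by rewrite subUset sub1set bA subxx.
  have TE : T \notin E by apply: contra eTA => /eEA.
  exists (b |: A), (T |: E).
    split; [by rewrite subUset sub1set bW | by rewrite cardsU1 bA cardA |].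
    by move=> T'; case/setU1P=> [-> // | /eEA eT'A]; rewrite (subset_trans eT'A) ?subsetUr.
  by rewrite subUset sub1set TN cardsU1 TE cardE.
have W_gt0 : 0 < #|W| by rewrite card_gt0.
have [|_ [E _ [EN cardE]]] := chain #|W|.-1; first by rewrite prednK.
by rewrite -(prednK W_gt0) ltnS -cardE subset_leq_card.
Qed.

Lemma connect_ind_from (T : finType) (r : rel T) (P : T -> Prop) x :
  P x -> (forall u w, connect r x u -> P u -> r u w -> P w) ->
  forall y, connect r x y -> P y.
Proof.
move=> Px step y /connectP [s]; elim/last_ind: s y => [|s z IH] y /=; first by move=> _ ->.
rewrite rcons_path last_rcons => /andP [xs sz] ->.
by apply: (step (last x s)) => //; [apply/connectP; exists s | exact: IH].
Qed.

Lemma two_others (K : finType) (X : K) : 2 < #|K| ->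
  exists Y Z, [/\ Y != X, Z != X & Y != Z].
Proof.
move=> K3; have : 1 < #|[set~ X]| by rewrite cardsC1 -ltnS (ltn_predK K3).
case/card_gt1P=> Y [Z [YX ZX YZ]].
by exists Y, Z; move: YX ZX; rewrite !inE => YX ZX.
Qed.

Section Gallai.
Variables (T K : finType) (t : T -> T -> K).
Hypothesis t_sym : forall x y, t x y = t y x.
Implicit Types (V : {set T}) (X : K).

Definition colour_in (V : {set T}) (X : K) : rel T :=
  fun x y => [&& x \in V, y \in V, x != y & t x y == X].

Definition rainbow (x y z : T) : bool :=
  [&& x != y, y != z, x != z, t x y != t y z, t y z != t x z & t x y != t x z].

Definition rainbow_free (V : {set T}) : bool :=
  [forall x in V, forall y in V, forall z in V, ~~ rainbow x y z].

Definition colours_connected (V : {set T}) : Prop :=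
  forall X x y, x \in V -> y \in V -> connect (colour_in V X) x y.

Lemma connect_colour_sym V X x y :
  connect (colour_in V X) x y = connect (colour_in V X) y x.
Proof.
apply: sym_connect_sym => {}x {}y.
by rewrite /colour_in t_sym eq_sym; case: (x \in V); case: (y \in V).
Qed.

Lemma connect_colour_mem V X x y : connect (colour_in V X) x y -> x \in V -> y \in V.
Proof.
move=> xy xV; apply: (@connect_ind_from _ _ (fun u => u \in V) _ xV _ _ xy).
by move=> u w _ _ /and4P [].
Qed.

Lemma rainbow_freeS V V' : V' \subset V -> rainbow_free V -> rainbow_free V'.
Proof.
move=> /subsetP sV'V /forall_inP rfV; apply/forall_inP => x /sV'V /rfV /forall_inP rfx.
apply/forall_inP => y /sV'V /rfx /forall_inP rfxy.
by apply/forall_inP => z /sV'V /rfxy.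
Qed.

Lemma rainbow_free_third V x y z : rainbow_free V ->
  x \in V -> y \in V -> z \in V -> x != y -> y != z -> x != z ->
  t x y != t x z -> t y z != t x y -> t y z = t x z.
Proof.
move=> /forall_inP rfV xV yV zV xy yz xz.
move: (rfV x xV) => /forall_inP /(_ y yV) /forall_inP /(_ z zV).
rewrite /rainbow xy yz xz /= => not_rainbow xy_xz yz_xy.
by apply/eqP; move: not_rainbow; rewrite xy_xz eq_sym yz_xy andbT negbK.
Qed.

Section VertexDeletion.
Variables (V : {set T}) (v : T).
Hypotheses (vV : v \in V) (rfV : rainbow_free V) (connV : colours_connected V).
Local Notation V' := (V :\ v).

Lemma colour_edge_from Y w : w \in V' -> exists2 y, y \in V' & t v y = Y.
Proof.
case/setD1P=> wv wV; case/connectP: (connV Y vV wV) => [[|y s]] /=.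
  by move=> _ wE; rewrite wE eqxx in wv.
case/andP=> /and4P [_ yV vy /eqP vyY] _ _.
by exists y; rewrite // !inE eq_sym vy.
Qed.

Section OneColour.
Variable X : K.
Local Notation conn' := (connect (colour_in V' X)).

Lemma reach_colour p : p \in V' -> exists2 x, conn' p x & t v x = X.
Proof.
move=> pV'.
pose P u := (exists2 x, conn' p x & t v x = X) \/ conn' p u.
suff [//|/connect_colour_mem/(_ pV')] : P v by rewrite !inE eqxx.
have pv : connect (colour_in V X) p v := connV X (setD1P pV').2 vV.
apply: (@connect_ind_from _ _ P _ (or_intror (connect0 _ p)) _ _ pv).
move=> u w _ [reached | pu /and4P [uV wV uw /eqP uwX]]; first by left.
have uV' := connect_colour_mem pu pV'.
have [wv | wv] := eqVneq w v; first by left; exists u; rewrite // t_sym -wv.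
have wV' : w \in V' by rewrite !inE wv.
by right; apply: connect_trans pu (connect1 _); rewrite /colour_in uV' wV' uw uwX /=.
Qed.

Lemma colour_spread W p p' q : W != X -> t p q = W -> colour_in V' X p p' ->
  q \in V' -> ~~ conn' p' q -> t p' q = W.
Proof.
move=> WX pqW pp' qV' np'q; have /and4P [pV' p'V' pp'_neq /eqP pp'X] := pp'.
have p'q : p' != q by apply: contraNneq np'q => ->.
have pq : p != q.
  by apply: contraNneq np'q => pq; rewrite connect_colour_sym -pq connect1.
have in_V u : u \in V' -> u \in V by case/setD1P.
rewrite -pqW (rainbow_free_third (x := p) (y := p') (z := q) rfV) ?in_V // pp'X.
  by rewrite pqW eq_sym.
by apply: contraNneq np'q => p'qX; apply: connect1; rewrite /colour_in p'V' qV' p'q p'qX /=.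
Qed.

Lemma component_colour W y0 x0 : W != X -> t v y0 = W -> t v x0 = X ->
  y0 \in V' -> x0 \in V' -> ~~ conn' y0 x0 ->
  forall p q, conn' y0 p -> conn' x0 q -> t p q = W.
Proof.
move=> WX vy0W vx0X y0V' x0V' ny0x0.
have y0x0W : t y0 x0 = W.
  have /setD1P [y0v y0V] := y0V'; have /setD1P [x0v x0V] := x0V'.
  have x0y0 : x0 != y0 by apply: contraNneq ny0x0 => ->.
  rewrite t_sym -vy0W (rainbow_free_third (x := v) rfV) // 1?eq_sym ?vx0X ?vy0W //.
  apply: contraNneq ny0x0 => x0y0X; rewrite connect_colour_sym connect1 //.
  by rewrite /colour_in x0V' y0V' x0y0 x0y0X /=.
have spread_left p : conn' y0 p -> t p x0 = W.
  apply: (@connect_ind_from _ _ (fun p => t p x0 = W) _ y0x0W) => u w y0u uxW uw.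
  apply: (colour_spread WX uxW uw x0V'); apply: contra ny0x0 => wx0.
  exact: connect_trans y0u (connect_trans (connect1 uw) wx0).
move=> p q y0p; have pV' := connect_colour_mem y0p y0V'.
apply: (@connect_ind_from _ _ (fun q => t p q = W) _ (spread_left p y0p)) => u w x0u puW uw.
rewrite t_sym; apply: (colour_spread WX _ uw pV'); first by rewrite t_sym.
apply: contra ny0x0 => wp; rewrite [conn' y0 x0]connect_colour_sym.
apply: connect_trans x0u (connect_trans (connect1 uw) (connect_trans wp _)).
by rewrite connect_colour_sym.
Qed.

Lemma cross_component_colour u q p : u \in V' -> q \in V' -> t v u != X ->
  ~~ conn' u q -> conn' u p -> t p q = t v u.
Proof.
move=> uV' qV' vuX nuq up; have [x0 qx0 vx0X] := reach_colour qV'.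
apply: (component_colour vuX erefl vx0X uV' (connect_colour_mem qx0 qV')) => //.
  by apply: contra nuq => ux0; apply: connect_trans ux0 _; rewrite connect_colour_sym.
by rewrite connect_colour_sym.
Qed.

End OneColour.

(* Otherwise some colour X is disconnected on V :\ v.  Let y, z be neighbours of v
   through edges of two other colours Y, Z: every edge from the X-component of y
   to another X-component has colour Y, and likewise for z and Z, which forces
   one edge to have both colours. *)
Lemma colours_connected_del : 2 < #|K| -> colours_connected V'.
Proof.
move=> K3 X a b aV' bV'; apply: contraT => nab.
have [Y [Z [YX ZX YZ]]] := two_others X K3.
have [y yV' vyY] := colour_edge_from Y aV'; have [z zV' vzZ] := colour_edge_from Z aV'.
have cross := @cross_component_colour X.
have [yz | nyz] := boolP (connect (colour_in V' X) y z).
  have [q qV' nyq] : exists2 q, q \in V' & ~~ connect (colour_in V' X) y q.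
    have [ya | nya] := boolP (connect (colour_in V' X) y a); last by exists a.
    exists b => //; apply: contra nab => yb.
    by apply: connect_trans yb; rewrite connect_colour_sym.
  have nzq : ~~ connect (colour_in V' X) z q.
    exact: contra (connect_trans yz) nyq.
  move: YZ; rewrite -vyY -vzZ -(cross y q z) ?vyY // -(cross z q z) ?vzZ //.
  by rewrite eqxx.
have nzy : ~~ connect (colour_in V' X) z y by rewrite connect_colour_sym.
move: YZ; rewrite -vyY -vzZ -(cross y z y) ?vyY // -(cross z y z) ?vzZ //.
by rewrite t_sym eqxx.
Qed.

End VertexDeletion.

Lemma rainbow_free_not_connected V : 2 < #|K| -> 2 <= #|V| ->
  rainbow_free V -> ~ colours_connected V.
Proof.
move=> K3; suff IH m : forall V, #|V| = m.+2 -> rainbow_free V -> ~ colours_connected V.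
  by move=> V2; apply: (IH (#|V| - 2)); rewrite -addn2 subnK.
elim: m => [|m IH] {}V cardV rfV connV;
  have [v vV] : exists v, v \in V by apply/set0Pn; rewrite -card_gt0 cardV.
all: have := cardV; rewrite (cardsD1 v V) vV add1n => -[cardV'].
  have /cards1P [w V'E] : #|V :\ v| == 1 by rewrite cardV'.
  have wV' : w \in V :\ v by rewrite V'E set11.
  have [Y [_ [YX _ _]]] := two_others (t v w) K3.
  have [y] := colour_edge_from vV connV Y wV'.
  by rewrite V'E inE => /eqP -> vwY; rewrite vwY eqxx in YX.
apply: IH (V :\ v) cardV' (rainbow_freeS (subsetDl _ _) rfV) _.
exact: colours_connected_del vV rfV connV K3.
Qed.

End Gallai.

Section TriangleColourSets.
Variables (n k : nat) (c : 'I_n -> 'I_n -> 'I_k).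

Lemma triangle_colour_setsP T :
  reflect (exists x y z, multicoloured c x y z /\ T = [set c x y; c y z; c x z])
          (T \in triangle_colour_sets c).
Proof.
apply: (iffP imsetP) => [[[[x y] z]] | [x [y [z [xyz ->]]]]].
  by rewrite inE => xyz ->; exists x, y, z.
by exists (x, y, z); rewrite ?inE.
Qed.

Lemma card_triangle_colour_set T : T \in triangle_colour_sets c -> #|T| = 3.
Proof.
case/triangle_colour_setsP=> x [y [z [/and5P [_ _ _ xy_yz /andP [yz_xz xy_xz]] ->]]].
by apply/eqP; rewrite card_set3 xy_yz yz_xz xy_xz.
Qed.

Lemma sum_card_triangle_colour_sets_containing :
  \sum_(i < k) #|[set T in triangle_colour_sets c | i \in T]| =
  3 * num_triangle_colour_sets c.
Proof.
rewrite sum_card_containing (eq_bigr (fun=> 3)) ?sum_nat_const 1?mulnC //.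
exact: card_triangle_colour_set.
Qed.

End TriangleColourSets.

Lemma merged_rainbow n k (c : 'I_n -> 'I_n -> 'I_k) (K : finType) (g : 'I_k -> K) :
  2 <= n -> 2 < #|K| -> connected_colouring c -> (forall X, exists i, g i = X) ->
  exists x y z, rainbow (fun x y => g (c x y)) x y z.
Proof.
move=> n2 K3 [c_sym c_conn] g_onto; set t := fun x y => g (c x y).
have t_sym x y : t x y = t y x by rewrite /t c_sym.
have /forall_inPn [x _ /forall_inPn [y _ /forall_inPn [z _]]] : ~~ rainbow_free t setT.
  apply/negP => rf; apply: (rainbow_free_not_connected t_sym K3 _ rf).
    by rewrite cardsT card_ord.
  move=> X x y _ _; have [i giX] := g_onto X.
  apply: connect_sub (c_conn i x y) => u w /andP [uw /eqP cuw].
  by apply: connect1; rewrite /colour_in !inE uw /t cuw giX eqxx.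
by rewrite negbK => xyz; exists x, y, z.
Qed.

Lemma crossing_triangle n k (c : 'I_n -> 'I_n -> 'I_k) (i : 'I_k) (A : {set 'I_k}) a b :
  2 <= n -> connected_colouring c -> i \notin A -> a \in A -> b \notin A -> b != i ->
  exists2 T, T \in triangle_colour_sets c &
    [/\ i \in T, ~~ (T :\ i \subset A) &
         exists2 b', b' \in [set~ i] & T :\ i \subset b' |: A].
Proof.
move=> n2 cc iA aA bA bi.
pose g col : option bool := if col == i then None else Some (col \in A).
have g_None col : (g col == None) = (col == i) by rewrite /g; case: (col == i).
have card_g : #|{: option bool}| = 3 by rewrite card_option card_bool.
have [||x [y [z]]] := merged_rainbow n2 _ cc (g := g); first by rewrite card_g.
  have ai : a != i by apply: contraNneq iA => <-.
  by case=> [[]|]; [exists a | exists b | exists i];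
     rewrite /g ?eqxx ?(negPf ai) ?aA ?(negPf bi) ?(negPf bA).
rewrite /rainbow => /and5P [xy yz xz gxy_yz /andP [gyz_xz gxy_xz]].
set T := [set c x y; c y z; c x z].
have distinct_g :
    [&& g (c x y) != g (c y z), g (c y z) != g (c x z) & g (c x y) != g (c x z)].
  by rewrite gxy_yz gyz_xz gxy_xz.
have g_onto_T X : exists2 col, col \in T & g col = X.
  have := mem_set3_full X card_g distinct_g.
  rewrite !inE -!orbA => /or3P [] /eqP ->;
    [exists (c x y) | exists (c y z) | exists (c x z)]; by rewrite // !inE eqxx ?orbT.
have [i' i'T /eqP] := g_onto_T None; rewrite g_None => /eqP i'i; rewrite {}i'i in i'T.
have [b' b'T gb'] := g_onto_T (Some false).
have b'i : b' != i by rewrite -g_None gb'.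
have b'A : b' \notin A by move: gb'; rewrite /g (negPf b'i) => -[->].
exists T; first apply/triangle_colour_setsP.
  exists x, y, z; split=> //; rewrite /multicoloured xy yz xz /=.
  by apply/and3P; split; [move: gxy_yz | move: gyz_xz | move: gxy_xz];
     apply: contraNneq => ->.
split=> //; first by apply/subsetPn; exists b'; rewrite ?in_setD1 ?b'i.
exists b'; first by rewrite !inE.
apply/subsetP => col /setD1P [coli colT]; rewrite !inE.
have [_|colA] := boolP (col \in A); first by rewrite orbT.
rewrite orbF; apply/eqP/(inj_on_set3 distinct_g colT b'T).
by rewrite gb' /g (negPf coli) (negPf colA).
Qed.

Lemma card_triangle_colour_sets_containing_ge n k (c : 'I_n -> 'I_n -> 'I_k) i :
  2 <= n -> connected_colouring c ->
  k - 2 <= #|[set T in triangle_colour_sets c | i \in T]|.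
Proof.
move=> n2 cc; have [k_le1 | k_gt1] := leqP k 1; first by rewrite (_ : k - 2 = 0) //; lia.
have cardW : #|[set~ i]| = k.-1 by rewrite cardsC1 card_ord.
suff : #|[set~ i]| <= #|[set T in triangle_colour_sets c | i \in T]|.+1.
  by rewrite cardW; lia.
apply: (grow_card_leq (e := fun T => T :\ i)); first by rewrite -card_gt0 cardW; lia.
move=> A AW /set0Pn [a aA] AW'.
have [b bW bA] : exists2 b, b \in [set~ i] & b \notin A.
  by apply/subsetPn; apply: contra AW' => WA; rewrite eqEsubset AW.
have iA : i \notin A by apply/negP => /(subsetP AW); rewrite !inE eqxx.
have bi : b != i by rewrite !inE in bW.
have [T TS [iT TA [b' b'W Tb'A]]] := crossing_triangle n2 cc iA aA bA bi.
by exists T; [rewrite inE TS | split=> //; exists b'].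
Qed.

Lemma triangle_colour_sets_lower n k (c : 'I_n -> 'I_n -> 'I_k) :
  2 <= n -> connected_colouring c -> k * (k - 2) <= 3 * num_triangle_colour_sets c.
Proof.
move=> n2 cc; rewrite -sum_card_triangle_colour_sets_containing.
rewrite -{1}[k]card_ord -sum_nat_const.
by apply: leq_sum => i _; exact: card_triangle_colour_sets_containing_ge.
Qed.

Lemma triangle_colour_set_rot (T K : finType) (c : T -> T -> K) x y z :
  (forall x y, c x y = c y x) -> [set c x y; c y z; c x z] = [set c y z; c z x; c y x].
Proof.
move=> c_sym; apply/setP => u; rewrite !inE (c_sym z x) (c_sym y x).
by case: (u == c x y); case: (u == c y z); case: (u == c x z).
Qed.

Lemma triangle_colour_set_swap (T K : finType) (c : T -> T -> K) x y z :
  (forall x y, c x y = c y x) -> [set c x y; c y z; c x z] = [set c y x; c x z; c y z].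
Proof.
move=> c_sym; apply/setP => u; rewrite !inE (c_sym y x).
by case: (u == c x y); case: (u == c y z); case: (u == c x z).
Qed.

Section CyclicColouring.
Variable k : nat.
Hypothesis k_gt1 : 1 < k.
(* p = 2k + 1, written so that 'Z_p, i.e. 'I_(Zp_trunc p).+2, is convertible to 'I_p. *)
Local Notation p := (2 * k).-1.+2.

(* A nonzero difference d has colour (circular distance of d to 0) - 1; the
   difference 0, which no edge has, gets the junk colour 0. *)
Definition circ_dist (d : 'Z_p) : nat := minn d (p - d).

Lemma circ_dist_lt (d : 'Z_p) : (circ_dist d).-1 < k.
Proof. by have := ltn_ord d; rewrite /circ_dist; lia. Qed.

Definition dist_colour (d : 'Z_p) : 'I_k := Ordinal (circ_dist_lt d).

Local Open Scope ring_scope.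

Definition cyclic_colouring (x y : 'Z_p) : 'I_k := dist_colour (x - y).

Definition colour_step (a : 'I_k) : 'Z_p := a.+1%:R.

Lemma val_gt0Zp (d : 'Z_p) : d != 0 -> (0 < d)%N.
Proof. by rewrite lt0n. Qed.

Lemma val_oppZp (d : 'Z_p) : d != 0 -> val (- d) = (p - d)%N.
Proof.
move=> /val_gt0Zp d_gt0; have d_lt := ltn_ord d.
by rewrite /= /Zp_trunc /= modn_small //; move: d_lt d_gt0; rewrite /Zp_trunc /=; lia.
Qed.

Lemma dist_colourN d : dist_colour (- d) = dist_colour d.
Proof.
have [-> | d0] := eqVneq d 0; first by rewrite oppr0.
apply: val_inj; rewrite /= /circ_dist val_oppZp //.
by have := ltn_ord d; have := val_gt0Zp d0; lia.
Qed.

Lemma dist_colour_inj d1 d2 : d1 != 0 -> d2 != 0 ->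
  dist_colour d1 = dist_colour d2 -> d1 = d2 \/ d1 = - d2.
Proof.
move=> d1_0 d2_0 /(congr1 val); rewrite /= /circ_dist => E.
have d1_lt : (d1 < p)%N := ltn_ord d1; have d2_lt : (d2 < p)%N := ltn_ord d2.
have d1_gt0 := val_gt0Zp d1_0; have d2_gt0 := val_gt0Zp d2_0.
have [|] : (d1 = d2 :> nat \/ d1 = p - d2 :> nat)%N by lia.
  by left; apply: val_inj.
by right; apply: val_inj; rewrite val_oppZp.
Qed.

Lemma val_colour_step a : colour_step a = a.+1 :> nat.
Proof. by rewrite val_Zp_nat // modn_small //; have := ltn_ord a; lia. Qed.

Lemma dist_colourK a : dist_colour (colour_step a) = a.
Proof.
by apply: val_inj; rewrite /= /circ_dist val_colour_step; have := ltn_ord a; lia.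
Qed.

Lemma colour_step_neq0 a : colour_step a != 0.
Proof. by apply/eqP => /(congr1 (@nat_of_ord _)); rewrite val_colour_step. Qed.

Hypothesis p_prime : prime p.

Lemma colour_step_unit a : colour_step a \is a GRing.unit.
Proof. by rewrite unitZpE // prime_coprime // gtnNdvd //; have := ltn_ord a; lia. Qed.

Lemma mul_natr_complement (i j : nat) (u : 'Z_p) :
  (i + j)%N = p -> i%:R * u = - (j%:R * u).
Proof.
by move=> ijp; apply/eqP; rewrite -addr_eq0 -mulrDl -natrD ijp pchar_Zp ?mul0r.
Qed.

Lemma cyclic_colouring_sym x y : cyclic_colouring x y = cyclic_colouring y x.
Proof. by rewrite /cyclic_colouring -opprB dist_colourN. Qed.

Lemma cyclic_colouring_connected : connected_colouring cyclic_colouring.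
Proof.
split=> [|a x y]; first exact: cyclic_colouring_sym.
set u := colour_step a.
have walk j : connect (colour_rel cyclic_colouring a) x (x + j%:R * u).
  elim: j => [|j IH]; first by rewrite mul0r addr0 connect0.
  apply: connect_trans IH (connect1 _); rewrite /colour_rel /cyclic_colouring.
  rewrite mulrSr mulrDl mul1r addrA opprD addrA subrr add0r.
  rewrite dist_colourN dist_colourK eqxx andbT.
  by rewrite -subr_eq0 opprD addrA subrr add0r oppr_eq0 colour_step_neq0.
have := walk (val ((y - x) / u)).
by rewrite natr_Zp divrK ?colour_step_unit // addrC subrK.
Qed.

Lemma cyclic_triangle_normal_form a x y z : x != y -> y != z -> x != z ->
  a \in [set cyclic_colouring x y; cyclic_colouring y z; cyclic_colouring x z] ->
  exists e, [/\ e != 0, e + colour_step a != 0 &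
    [set cyclic_colouring x y; cyclic_colouring y z; cyclic_colouring x z] =
    [set a; dist_colour e; dist_colour (e + colour_step a)]].
Proof.
have normal x' y' z' :
    x' != y' -> y' != z' -> x' != z' -> cyclic_colouring x' y' = a ->
    exists e, [/\ e != 0, e + colour_step a != 0 &
    [set cyclic_colouring x' y'; cyclic_colouring y' z'; cyclic_colouring x' z'] =
    [set a; dist_colour e; dist_colour (e + colour_step a)]].
  move=> xy yz xz xyA.
  have : dist_colour (x' - y') = dist_colour (colour_step a) by rewrite dist_colourK.
  case/dist_colour_inj; rewrite ?subr_eq0 ?colour_step_neq0 // => xyE.
    exists (y' - z'); rewrite -xyE [_ + (x' - y')]addrC addrA subrK !subr_eq0.
    by rewrite yz xz -xyA.
  have yxE : y' - x' = colour_step a by rewrite -[y' - x']opprB xyE opprK.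
  exists (x' - z'); rewrite -yxE [_ + (y' - x')]addrC addrA subrK !subr_eq0 xz yz.
  rewrite triangle_colour_set_swap; last exact: cyclic_colouring_sym.
  by rewrite (cyclic_colouring_sym y' x') xyA.
move=> xy yz xz; have rot := triangle_colour_set_rot _ _ _ cyclic_colouring_sym.
have zx : z != x by rewrite eq_sym.
have yx : y != x by rewrite eq_sym.
have zy : z != y by rewrite eq_sym.
rewrite !inE -!orbA => /or3P [] /eqP aE.
- exact: normal xy yz xz (esym aE).
- by rewrite rot; apply: normal yz zx yx (esym aE).
- rewrite rot rot; apply: normal zx xy zy _.
  by rewrite cyclic_colouring_sym aE.
Qed.

(* Write e = t u.  The values t = 0, 1, k, 2k - 1, 2k make e or e + u zero or two
   colours equal; t in [2, k - 1] is the shape j = t - 2, and t in [k + 1, 2k - 2]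
   is the negative of the triangle of shape j = 2k - 2 - t. *)
Lemma cyclic_triangle_shape a e : e != 0 -> e + colour_step a != 0 ->
  #|[set a; dist_colour e; dist_colour (e + colour_step a)]| = 3 ->
  exists j : 'I_(k - 2),
    [set a; dist_colour e; dist_colour (e + colour_step a)] =
    [set a; dist_colour ((j + 2)%N%:R * colour_step a);
            dist_colour ((j + 3)%N%:R * colour_step a)].
Proof.
move=> e0 eu0 /eqP; rewrite card_set3 => /and3P [ae e_eu a_eu].
set u := colour_step a in eu0 a_eu e_eu *.
have [t t_lt eE] : exists2 t, (t < p)%N & e = t%:R * u.
  by exists (e / u); [exact: ltn_ord | rewrite natr_Zp divrK ?colour_step_unit].
have euE : e + u = (t + 1)%N%:R * u by rewrite eE natrD mulrDl mul1r.
have : t = 0%N \/ t = 1%N \/ t = k \/ t = (2 * k - 1)%N \/ t = (2 * k)%N \/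
       (2 <= t <= k - 1)%N \/ (k + 1 <= t <= 2 * k - 2)%N by lia.
case=> [tE | [tE | [tE | [tE | [tE | [/andP [t_ge t_le] | /andP [t_ge t_le]]]]]]].
- by move: e0; rewrite eE tE mul0r eqxx.
- by move: ae; rewrite eE tE mul1r dist_colourK eqxx.
- have euN : e + u = - e by rewrite euE eE tE; apply: mul_natr_complement; lia.
  by move: e_eu; rewrite euN dist_colourN eqxx.
- have tp : (t + 1 + 1 = p)%N by lia.
  have euN : e + u = - u by rewrite euE (mul_natr_complement _ tp) mul1r.
  by move: a_eu; rewrite euN dist_colourN dist_colourK eqxx.
- have tp : (t + 1 = p)%N by lia.
  by move: eu0; rewrite euE tp pchar_Zp // mul0r eqxx.
- have j_lt : (t - 2 < k - 2)%N by lia.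
  have j2 : (t - 2 + 2 = t)%N by lia.
  have j3 : (t - 2 + 3 = t + 1)%N by lia.
  by exists (Ordinal j_lt); rewrite /= j2 j3 -eE -euE.
- have j_lt : (2 * k - t - 2 < k - 2)%N by lia.
  have j2 : (2 * k - t - 2 + 2)%N%:R * u = - (e + u).
    by rewrite euE; apply: mul_natr_complement; lia.
  have j3 : (2 * k - t - 2 + 3)%N%:R * u = - e.
    by rewrite eE; apply: mul_natr_complement; lia.
  exists (Ordinal j_lt); rewrite /= j2 j3 !dist_colourN.
  apply/setP => x; rewrite !inE.
  by case: (x == a); case: (x == dist_colour e); case: (x == dist_colour (e + u)).
Qed.

Lemma card_cyclic_triangle_colour_sets_containing a :
  (#|[set T in triangle_colour_sets cyclic_colouring | a \in T]| <= k - 2)%N.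
Proof.
pose shape (j : 'I_(k - 2)) := [set a; dist_colour ((j + 2)%N%:R * colour_step a);
                                       dist_colour ((j + 3)%N%:R * colour_step a)].
rewrite -[(k - 2)%N]card_ord -cardsT; apply: leq_trans (leq_imset_card shape _).
apply/subset_leq_card/subsetP => T; rewrite inE => /andP [TS aT].
have T3 := card_triangle_colour_set TS.
case/triangle_colour_setsP: TS => x [y [z [/and4P [xy yz xz _] TE]]].
rewrite TE in aT T3 *; have [e [e0 eu0 Te]] := cyclic_triangle_normal_form xy yz xz aT.
rewrite Te in T3 *; have [j ->] := cyclic_triangle_shape e0 eu0 T3.
by apply/imsetP; exists j.
Qed.

Lemma cyclic_triangle_colour_sets_upper :
  (3 * num_triangle_colour_sets cyclic_colouring <= k * (k - 2))%N.
Proof.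
rewrite -sum_card_triangle_colour_sets_containing.
apply: (@leq_trans (\sum_(a < k) (k - 2))%N); last by rewrite sum_nat_const card_ord.
by apply: leq_sum => a _; apply: card_cyclic_triangle_colour_sets_containing.
Qed.

End CyclicColouring.

Theorem corollary5 (k : nat) :
  2 <= k -> prime (2 * k + 1) -> f_equals k ((k * (k - 2)) %/ 3).
Proof.
move=> k_gt1 p_prime; have {}p_prime : prime (2 * k).-1.+2.
  by rewrite (_ : (2 * k).-1.+2 = 2 * k + 1) //; lia.
split=> [|n c n2 cc]; last first.
  rewrite -(mulKn (num_triangle_colour_sets c) (_ : 0 < 3)) //.
  exact/leq_div2r/triangle_colour_sets_lower.
have cc := cyclic_colouring_connected k_gt1 p_prime.
exists (2 * k).-1.+2, (cyclic_colouring k_gt1); split=> //; split=> //.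
have count : 3 * num_triangle_colour_sets (cyclic_colouring k_gt1) = k * (k - 2).
  apply/eqP; rewrite eqn_leq cyclic_triangle_colour_sets_upper //.
  exact: triangle_colour_sets_lower.
by rewrite -count mulKn.
Qed.
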